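(* Let $(X,G)$ be a dislocation space with $X$ a reflexive Banach space, and let $(u_n)$ be a bounded sequence in $X$. Let $L\in\mathbb{N}_0$, and let sequences $(g^{(l)}_n)_n\subset G$ and elements $w^{(l)}\in X$ ($l=0,\dots,L$) satisfy $g^{(0)}_n=\mathrm{Id}_X$, $(g^{(l)}_n)^{-1}u_n\to w^{(l)}$ weakly in $X$ for $l=0,\dots,L$, and $(g^{(l)}_n)^{-1}g^{(m)}_n\rightharpoonup 0$ operator-weakly whenever $0\le l<m\le L$, as $n\to\infty$. Assume there is a sequence $(g^{(L+1)}_n)\subset G$ such that, along a subsequence, $$(g^{(L+1)}_n)^{-1}\Big(u_n-\sum_{l=0}^L g^{(l)}_nw^{(l)}\Big)\to w^{(L+1)}\neq0\quad\text{weakly in }X.$$ Then, along this subsequence, $(g^{(l)}_n)^{-1}g^{(L+1)}_n\rightharpoonup0$ operator-weakly as $n\to\infty$ for every $l=0,\dots,L$.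
   Context: Dislocation space: a Banach space $X$ with a group $G\subset\mathcal{B}(X)$ (under composition) of bijective linear isometries such that (1) every $(g_n)\subset G$ with $g_n\not\rightharpoonup0$ has an operator-strongly convergent subsequence (limit in $\mathcal{B}(X)$), and (2) for every $(g_n)\subset G$ with $g_n\not\rightharpoonup0$ and every $(u_n)\subset X$ with $u_n\to0$ weakly, there is a subsequence with $g_{n_j}u_{n_j}\to0$ weakly. Here $A_n\rightharpoonup A$ (operator-weakly) means $A_nu\to Au$ weakly for all $u\in X$, and operator-strong convergence means $A_nu\to Au$ in norm for all $u$. *)

From HB Require Import structures.
From mathcomp Require Import all_boot all_order all_algebra.
From mathcomp Require Import all_classical all_reals all_analysis.
Import Order.TTheory GRing.Theory Num.Theory.
Import numFieldNormedType.Exports.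
Set Implicit Arguments. Unset Strict Implicit. Unset Printing Implicit Defensive.
Local Open Scope ring_scope.
Local Open Scope classical_set_scope.

Definition lin_functional {R : realType} {X : normedModType R} (f : X -> R) :=
  (forall (a : R) (x y : X), f (a *: x + y) = a * f x + f y) /\ continuous f.

Definition weak_cvg {R : realType} {X : normedModType R} (u : nat -> X) (w : X) :=
  forall f : X -> R, lin_functional f -> (fun n => f (u n)) @ \oo --> f w.

Definition bounded_op {R : realType} {X : normedModType R} (A : X -> X) :=
  (forall (a : R) (x y : X), A (a *: x + y) = a *: A x + A y) /\ continuous A.

Definition op_weak_cvg {R : realType} {X : normedModType R}
  (A : nat -> X -> X) (B : X -> X) := forall u : X, weak_cvg (fun n => A n u) (B u).

Definition op_strong_cvg {R : realType} {X : normedModType R}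
  (A : nat -> X -> X) (B : X -> X) := forall u : X, (fun n => A n u) @ \oo --> B u.

Definition ginv {R : realType} {X : normedModType R} (g : X -> X) : X -> X :=
  fun y => xget 0 [set x | g x = y].

Definition isometry {R : realType} {X : normedModType R} (g : X -> X) :=
  forall x : X, `|g x| = `|x|.

Definition strictly_incr (phi : nat -> nat) := forall m n, (m < n)%N -> (phi m < phi n)%N.

Definition dislocation_space {R : realType} {X : normedModType R} (G : set (X -> X)) :=
  (forall g, G g -> bounded_op g /\ bijective g /\ isometry g) /\
  G id /\ (forall g h, G g -> G h -> G (g \o h)) /\ (forall g, G g -> G (ginv g)) /\
  (* (1) *)
  (forall gs : nat -> X -> X, (forall n, G (gs n)) ->
     ~ op_weak_cvg gs (fun _ => 0) ->
     exists phi, strictly_incr phi /\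
       exists A : X -> X, bounded_op A /\ op_strong_cvg (fun j => gs (phi j)) A) /\
  (* (2) *)
  (forall (gs : nat -> X -> X) (u : nat -> X), (forall n, G (gs n)) ->
     ~ op_weak_cvg gs (fun _ => 0) -> weak_cvg u 0 ->
     exists phi, strictly_incr phi /\ weak_cvg (fun j => gs (phi j) (u (phi j))) 0).

(* |Phi f| <= C ||f||_{X*}, unfolded: ||f||_{X*} is the infimum of the M with
   |f x| <= M ||x|| for all x *)
Definition reflexive_space {R : realType} (X : normedModType R) :=
  forall Phi : (X -> R) -> R,
    (forall (a : R) (f g : X -> R), lin_functional f -> lin_functional g ->
       Phi (fun x => a * f x + g x) = a * Phi f + Phi g) ->
    (exists C : R, forall (f : X -> R) (M : R), lin_functional f ->
       (forall x, `|f x| <= M * `|x|) -> `|Phi f| <= C * M) ->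
    exists x : X, forall f, lin_functional f -> Phi f = f x.

(* Let [k_j = (g^(L+1)_j)^{-1} g^(l)_j] (along the subsequence [phi]).  If
   the conclusion failed for some [l], then [k_j] would not tend to [0]
   operator-weakly (orthogonality is symmetric in a dislocation space).
   On the other hand [v_j = (g^(l)_j)^{-1} (u_j - sum_m g^(m)_j w^(m))] is
   weakly null, since the term [m = l] exactly cancels the weak limit [w^(l)]
   and the terms [m <> l] vanish by orthogonality.  Property (2) of
   dislocation spaces then makes [k_j v_j] weakly null along a further
   subsequence, whereas by hypothesis [k_j v_j] tends weakly to
   [w^(L+1) <> 0]; weak limits being unique, this is a contradiction. *)

From HB Require Import structures.
From mathcomp Require Import all_boot all_order all_algebra.
From mathcomp Require Import all_classical all_reals all_analysis.
From mathcomp Require Import lra.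
Import Order.TTheory GRing.Theory Num.Theory.
Import numFieldNormedType.Exports.
Local Open Scope ring_scope.
Local Open Scope classical_set_scope.

Section HahnBanach.
Context {R : realType} {X : normedModType R}.
Implicit Types (A : set (X * R)) (x s : X) (a c t : R).

(* [A] is the graph of a linear functional, defined on a subspace of [X],
   which is dominated by the norm. *)
Definition dominated_graph A :=
  [/\ (forall x a b, A (x, a) -> A (x, b) -> a = b),
      (forall c x y a b, A (x, a) -> A (y, b) -> A (c *: x + y, c * a + b)) &
      (forall x a, A (x, a) -> a <= `|x|)].

Definition graph_extension A (x0 : X) c : set (X * R) :=
  [set z | exists s a t, A (s, a) /\ z = (s + t *: x0, a + t * c)].

Lemma dominated_graph0 A x a : dominated_graph A -> A (x, a) -> A (0, 0).
Proof.
move=> [_ Alin _] Ax; have := Alin (-1) x x a a Ax Ax.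
by rewrite scaleN1r addNr mulN1r addNr.
Qed.

Lemma graph_extension_sub A x0 c : A `<=` graph_extension A x0 c.
Proof.
by move=> [s a] As; exists s, a, 0; split => //; rewrite scale0r mul0r !addr0.
Qed.

Lemma graph_extension_dir A x0 c : A (0, 0) -> graph_extension A x0 c (x0, c).
Proof. by move=> A00; exists 0, 0, 1; rewrite add0r scale1r add0r mul1r. Qed.

Lemma graph_extension_dominated A x0 c :
  dominated_graph A -> A (0, 0) -> ~ (exists a, A (x0, a)) ->
  (forall s a t, A (s, a) -> a + t * c <= `|s + t *: x0|) ->
  dominated_graph (graph_extension A x0 c).
Proof.
move=> [Afun Alin Adom] A00 x0A cdom; split.
- move=> x a b [s1 [a1 [t1 [A1 /pair_equal_spec[e1 ->]]]]]
              [s2 [a2 [t2 [A2 /pair_equal_spec[e2 ->]]]]].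
  have [t12|t12] := eqVneq t1 t2.
    subst t2; have es : s1 = s2 by apply: (addIr (t1 *: x0)); rewrite -e1 -e2.
    by rewrite es in A1; rewrite (Afun _ _ _ A1 A2).
  exfalso; apply: x0A; eexists.
  have := Alin ((t1 - t2)^-1) _ _ _ _ (Alin (-1) _ _ _ _ A1 A2) A00.
  rewrite addr0; congr (A (_, _)).
  have -> : -1 *: s1 + s2 = (t1 - t2) *: x0.
    have E : s1 + t1 *: x0 = s2 + t2 *: x0 by rewrite -e1 -e2.
    by rewrite scaleN1r scalerBl -[t1 *: x0](addKr s1) E addrA addrK addrC.
  by rewrite scalerA mulVf ?scale1r // subr_eq0.
- move=> c' x y a b [s1 [a1 [t1 [A1 /pair_equal_spec[-> ->]]]]]
              [s2 [a2 [t2 [A2 /pair_equal_spec[-> ->]]]]].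
  exists (c' *: s1 + s2), (c' * a1 + a2), (c' * t1 + t2); split; first exact: Alin.
  congr pair; first by rewrite scalerDr scalerA scalerDl addrACA.
  by rewrite mulrDr mulrA mulrDl addrACA.
- by move=> x a [s [a1 [t [A1 /pair_equal_spec[-> ->]]]]]; exact: cdom.
Qed.

(* The one-step Hahn-Banach lemma: some value at [x0] is compatible with the
   norm.  It is the supremum of the lower bounds [a - |s - x0|]. *)
Lemma extension_value_exists A x0 : dominated_graph A -> A (0, 0) ->
  exists c, forall s a t, A (s, a) -> a + t * c <= `|s + t *: x0|.
Proof.
move=> [Afun Alin Adom] A00.
have lower_le_upper s1 a1 s2 a2 : A (s1, a1) -> A (s2, a2) ->
    a1 - `|s1 - x0| <= `|s2 + x0| - a2.
  move=> A1 A2; have := Adom _ _ (Alin 1 _ _ _ _ A1 A2); rewrite scale1r mul1r.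
  have : `|s1 + s2| <= `|s1 - x0| + `|s2 + x0|.
    by rewrite -[s1 + s2]addr0 -(addNr x0) addrACA ler_normD.
  lra.
pose S := [set r | exists s a, A (s, a) /\ r = a - `|s - x0|].
have S_ub s2 a2 : A (s2, a2) -> ubound S (`|s2 + x0| - a2).
  by move=> A2 r [s [a [As ->]]]; exact: lower_le_upper.
have S_sup : has_sup S.
  by split; [exists (0 - `|0 - x0|), 0, 0 | exists (`|0 + x0| - 0); exact: S_ub].
exists (sup S) => s a t As.
have Ascale r : A (r *: s, r * a) by have := Alin r _ _ _ _ As A00; rewrite !addr0.
have [t0|t0|->] := ltgtP t 0; last by rewrite mul0r scale0r !addr0; exact: Adom.
- have r0 : 0 < - t by rewrite oppr_gt0.
  have : (- t)^-1 * a - `|(- t)^-1 *: s - x0| <= sup S.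
    by apply: sup_upper_bound => //; exists ((- t)^-1 *: s), ((- t)^-1 * a).
  rewrite -(ler_pM2l r0) mulrBr mulrA mulfV ?gt_eqF // mul1r.
  rewrite -[X in _ - X * _]gtr0_norm // -normrZ scalerBr scalerA mulfV ?gt_eqF //.
  rewrite scale1r scaleNr opprK; lra.
- have : sup S <= `|t^-1 *: s + x0| - t^-1 * a by apply: ge_sup; [case: S_sup | exact: S_ub].
  rewrite -(ler_pM2l t0) mulrBr mulrA mulfV ?gt_eqF // mul1r.
  rewrite -[X in X * `|_| - _]gtr0_norm // -normrZ scalerDr scalerA mulfV ?gt_eqF //.
  rewrite scale1r; lra.
Qed.

(* Dominated graphs are closed under unions of chains, so Zorn's lemma
   applies to them. *)
Lemma dominated_graph_chain (F : set (set (X * R))) :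
  F `<=` dominated_graph -> total_on F subset ->
  dominated_graph (\bigcup_(Y in F) Y).
Proof.
move=> Fdom Ftot.
have common z1 z2 : (\bigcup_(Y in F) Y) z1 -> (\bigcup_(Y in F) Y) z2 ->
    exists2 Y, F Y & Y z1 /\ Y z2.
  move=> [Y1 FY1 Y1z] [Y2 FY2 Y2z].
  have [/(_ _ Y1z) Y2z1|/(_ _ Y2z) Y1z2] := Ftot _ _ FY1 FY2.
    by exists Y2.
  by exists Y1.
split.
- move=> x a b H1 H2; have [Y /Fdom[Yfun _ _] [Y1 Y2]] := common _ _ H1 H2.
  exact: Yfun Y1 Y2.
- move=> c x y a b H1 H2; have [Y FY [Y1 Y2]] := common _ _ H1 H2.
  have [_ Ylin _] := Fdom _ FY; exists Y => //; exact: Ylin.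
- by move=> x a [Y /Fdom[_ _ Ydom] YA]; exact: Ydom YA.
Qed.

Lemma maximal_graph_total A : dominated_graph A -> A (0, 0) ->
  (forall B, A `<` B -> ~ dominated_graph B) -> forall x, exists a, A (x, a).
Proof.
move=> Adom A00 Amax x0; apply: contrapT => x0A.
have [c cdom] := extension_value_exists _ x0 Adom A00.
apply: (Amax (graph_extension A x0 c)).
  split; first exact: graph_extension_sub.
  by move=> /(_ _ (graph_extension_dir _ x0 c A00)) Ax0; apply: x0A; exists c.
exact: graph_extension_dominated.
Qed.

Lemma total_graph_functional A : dominated_graph A ->
  (forall x, exists a, A (x, a)) ->
  exists2 f, lin_functional f & forall x, A (x, f x).
Proof.
move=> [Afun Alin Adom] Atot.
pose f x := xget 0 [set a | A (x, a)].
have Af x : A (x, f x) by exact: (xgetPex 0 (Atot x)).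
have f_lin a x y : f (a *: x + y) = a * f x + f y.
  exact: Afun (Af _) (Alin _ _ _ _ _ (Af x) (Af y)).
have fB x y : f (x - y) = f x - f y.
  by rewrite -scaleN1r addrC f_lin mulN1r addrC.
have f_le x : `|f x| <= `|x|.
  rewrite ler_norml Adom // andbT lerNl.
  have f0 : f 0 = 0 by have := fB 0 0; rewrite subr0 subrr.
  by rewrite -[- f x]add0r -f0 -fB sub0r -[`|x|]normrN Adom.
exists f => //; split => // x; apply/cvgrPdist_lt => e e0; near=> z.
by rewrite -fB (le_lt_trans (f_le _)) //; near: z; exact: cvgr_dist_lt.
Unshelve. all: by end_near.
Qed.

Lemma separating_functional {w : X} : w != 0 ->
  exists2 f, lin_functional f & f w = `|w|.
Proof.
move=> w0.
pose seeded A := dominated_graph A /\ (A !=set0 -> A (w, `|w|)).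
have seeded_chain (F : set (set (X * R))) : F `<=` seeded -> total_on F subset ->
    seeded (\bigcup_(Y in F) Y).
  move=> Fs Ftot; split; first by apply: dominated_graph_chain => // Y /Fs[].
  by move=> [z [Y FY Yz]]; have [_ Yw] := Fs _ FY; exists Y => //; apply: Yw; exists z.
have [A [[Adom Aw] Amax]] := Zorn_bigcup seeded_chain.
have line_dom : dominated_graph (graph_extension [set (0, 0)] w `|w|).
  apply: graph_extension_dominated => //.
  - split; first by move=> x a b /pair_equal_spec[_ ->] /pair_equal_spec[_ ->].
      by move=> c x y a b /pair_equal_spec[-> ->] /pair_equal_spec[-> ->];
        rewrite scaler0 mulr0 !addr0.
    by move=> x a /pair_equal_spec[-> ->]; rewrite normr0.
  - by move=> [a /pair_equal_spec[/eqP]]; rewrite (negbTE w0).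
  move=> s a t /pair_equal_spec[-> ->].
  by rewrite !add0r normrZ ler_wpM2r // ler_norm.
have Awnorm : A (w, `|w|).
  apply: Aw; apply: contrapT => /set0P/negP/negPn/eqP A0.
  apply: (Amax (graph_extension [set (0, 0)] w `|w|)); last first.
    by split=> // _; exact: graph_extension_dir.
  rewrite A0; split; first exact: sub0set.
  by move=> /(_ _ (graph_extension_dir _ w `|w| erefl)).
have A00 := dominated_graph0 _ _ _ Adom Awnorm.
have Atot : forall x, exists a, A (x, a).
  apply: maximal_graph_total => // B AB Bdom; apply: (Amax B AB); split => //.
  by move=> _; exact: (properW AB).
have [f flin Af] := total_graph_functional _ Adom Atot.
by exists f => //; have [Afun _ _] := Adom; exact: Afun (Af w) Awnorm.
Qed.

End HahnBanach.

Section LinearMaps.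
Context {R : realType} {X : normedModType R}.

(* Continuous linear functionals and bounded operators, repackaged as
   instances of the library's linear maps, so that its linearity lemmas and
   its boundedness of continuous linear maps apply to them. *)
Definition functional_of {f : X -> R} (hf : lin_functional f) : {linear X -> R^o} :=
  HB.pack f (GRing.isLinear.Build _ _ _ _ f (fun a x y => proj1 hf a x y)).

Definition operator_of {A : X -> X} (hA : bounded_op A) : {linear X -> X} :=
  HB.pack A (GRing.isLinear.Build _ _ _ _ A (fun a x y => proj1 hA a x y)).

Lemma functionalB (f : X -> R) x y : lin_functional f -> f (x - y) = f x - f y.
Proof. by move=> hf; exact: (linearB (functional_of hf)). Qed.

Lemma functional_bound {f : X -> R} : lin_functional f ->
  exists2 C, 0 < C & forall x, `|f x| <= C * `|x|.
Proof. by move=> hf; exact: (linear_lipschitz (f := functional_of hf) (proj2 hf)). Qed.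

Lemma operatorB {A : X -> X} x y : bounded_op A -> A (x - y) = A x - A y.
Proof. by move=> hA; exact: (linearB (operator_of hA)). Qed.

Lemma operator_sum (A : X -> X) n (F : 'I_n -> X) : bounded_op A ->
  A (\sum_(i < n) F i) = \sum_(i < n) A (F i).
Proof. by move=> hA; exact: (linear_sum (operator_of hA)). Qed.

End LinearMaps.

Lemma strictly_incr_ge {p : nat -> nat} : strictly_incr p -> forall j, (j <= p j)%N.
Proof. by move=> sp; elim=> [//|j IH]; apply: leq_ltn_trans IH (sp _ _ _). Qed.

Lemma strictly_incr_cvg {p : nat -> nat} : strictly_incr p -> p @ \oo --> \oo.
Proof.
move=> sp; apply/cvgnyPge => N; near=> j.
apply: (@leq_trans j); last exact: strictly_incr_ge.
by near: j; exact: nbhs_infty_ge.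
Unshelve. all: by end_near.
Qed.

Section WeakConvergence.
Context {R : realType} {X : normedModType R}.
Implicit Types (u v : nat -> X) (a b : X).

Lemma functional_sum (f : X -> R) (I : Type) (r : seq I) (P : pred I) (F : I -> X) :
  lin_functional f -> f (\sum_(i <- r | P i) F i) = \sum_(i <- r | P i) f (F i).
Proof. by move=> hf; exact: (linear_sum (functional_of hf)). Qed.

Lemma weak_cvg_subseq {u a} {p : nat -> nat} :
  strictly_incr p -> weak_cvg u a -> weak_cvg (u \o p) a.
Proof.
by move=> sp hu f hf; exact: (cvg_comp p (fun n => f (u n)) (strictly_incr_cvg sp) (hu f hf)).
Qed.

Lemma weak_cvg_cst a : weak_cvg (fun _ => a) a.
Proof. by move=> f hf; exact: cvg_cst. Qed.

Lemma weak_cvgB {u v a b} : weak_cvg u a -> weak_cvg v b ->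
  weak_cvg (fun n => u n - v n) (a - b).
Proof.
move=> hu hv f hf; rewrite functionalB //.
under eq_cvg do rewrite functionalB //.
exact: cvgB (hu f hf) (hv f hf).
Qed.

Lemma weak_cvg_sum (I : Type) (r : seq I) (P : pred I)
    (F : I -> nat -> X) (a : I -> X) :
  (forall i, P i -> weak_cvg (F i) (a i)) ->
  weak_cvg (fun n => \sum_(i <- r | P i) F i n) (\sum_(i <- r | P i) a i).
Proof.
move=> hF f hf; rewrite functional_sum //.
under eq_cvg do rewrite functional_sum //.
by apply: cvg_big => // [|i Pi]; [exact: add_continuous | exact: hF].
Qed.

(* By Hahn-Banach, weak limits are unique. *)
Lemma weak_cvg_unique {u a b} : weak_cvg u a -> weak_cvg u b -> a = b.
Proof.
move=> ha hb; apply/subr0_eq/eqP; apply: contrapT => /negP ab.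
have [f hf fab] := separating_functional ab.
have : f a = f b by exact: (cvg_unique _ (ha f hf) (hb f hf)).
by move/eqP; rewrite -subr_eq0 -functionalB // fab normr_eq0 (negbTE ab).
Qed.

End WeakConvergence.

Section Inverse.
Context {R : realType} {X : normedModType R}.
Implicit Types (g h : X -> X) (x y : X).

Lemma ginvK g y : bijective g -> g (ginv g y) = y.
Proof.
by move=> [g' gK g'K]; apply: (xgetPex 0 (P := [set x | g x = y])); exists (g' y).
Qed.

Lemma ginv_eq g x y : bijective g -> g x = y -> ginv g y = x.
Proof. by move=> bg <-; apply: (bij_inj bg); rewrite ginvK. Qed.

Lemma ginvKl g x : bijective g -> ginv g (g x) = x.
Proof. by move=> bg; exact: ginv_eq. Qed.

Lemma ginv_comp g h y : bijective g -> bijective h ->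
  ginv (ginv g \o h) y = ginv h (g y).
Proof.
move=> bg bh; apply: ginv_eq; last by rewrite /= ginvK // ginvKl.
exists (ginv h \o g) => x /=; first by rewrite ginvK // ginvKl.
by rewrite ginvK // ginvKl.
Qed.

End Inverse.

Lemma op_weak_cvg_apply {R : realType} {X : normedModType R}
    (A : nat -> X -> X) (y : nat -> X) (y0 : X) :
  (forall n, bounded_op (A n) /\ forall x, `|A n x| = `|x|) ->
  op_weak_cvg A (fun _ => 0) -> y @ \oo --> y0 ->
  weak_cvg (fun n => A n (y n)) 0.
Proof.
move=> Aiso A0 yy0 f hf.
have f0 : f 0 = 0 by exact: (linear0 (functional_of hf)).
have [C C0 fC] := functional_bound hf.
have split_y n : f (A n (y n)) = f (A n y0) + f (A n (y n - y0)).
  by rewrite (operatorB _ _ (Aiso n).1) functionalB // addrC subrK.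
have main_part : (fun n => f (A n y0)) @ \oo --> 0 by rewrite -f0; exact: A0.
have error_part : (fun n => f (A n (y n - y0))) @ \oo --> 0.
  apply/cvgrPdist_lt => e e0.
  move/cvgrPdist_lt : yy0 => /(_ (e / C)); rewrite divr_gt0 // => /(_ isT).
  apply: filterS => n yn.
  rewrite sub0r normrN (le_lt_trans (fC _)) // (Aiso n).2.
  by rewrite -ltr_pdivlMl // mulrC distrC.
under eq_cvg do rewrite split_y.
rewrite f0; have := cvgD main_part error_part; rewrite addr0; exact.
Qed.

Section DislocationSpace.
Context {R : realType} {X : normedModType R} {G : set (X -> X)}.
Hypothesis DS : dislocation_space G.

Lemma dislocation_bijective {g} : G g -> bijective g.
Proof. by have [HG _] := DS; move=> /HG[_ []]. Qed.

Lemma dislocation_iso {g} : G g -> bounded_op g /\ forall x, `|g x| = `|x|.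
Proof. by have [HG _] := DS; move=> /HG[? [_ ?]]. Qed.

Lemma dislocation_inv {g} : G g -> G (ginv g).
Proof. by have [_ [_ [_ [Ginv _]]]] := DS; exact: Ginv. Qed.

Lemma dislocation_quotient {g h} : G g -> G h -> G (ginv g \o h).
Proof.
by have [_ [_ [Gcomp _]]] := DS; move=> Gg Gh; apply/Gcomp/Gh; exact: dislocation_inv.
Qed.

(* Otherwise, by property (1), a
   subsequence of [g_n^{-1}] converges strongly, and then
   [x = g_n (g_n^{-1} x)] is weakly null for every [x], i.e. [X = 0]. *)
Lemma op_weak_cvg_inv (gs : nat -> X -> X) : (forall n, G (gs n)) ->
  op_weak_cvg gs (fun _ => 0) -> op_weak_cvg (fun n => ginv (gs n)) (fun _ => 0).
Proof.
have [_ [_ [_ [_ [strong_sub _]]]]] := DS.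
move=> Ggs gs0; apply: contrapT => ginv_not0.
have [psi [psi_incr [A [_ ginvA]]]] :=
  strong_sub _ (fun n => dislocation_inv (Ggs n)) ginv_not0.
have X0 (x : X) : x = 0.
  apply: (weak_cvg_unique (weak_cvg_cst x)).
  have -> : (fun _ => x) = fun j => gs (psi j) (ginv (gs (psi j)) x).
    by apply: funext => j; rewrite ginvK //; exact: dislocation_bijective.
  apply: (op_weak_cvg_apply _ _ _ (fun n => dislocation_iso (Ggs (psi n))) _ (ginvA x)).
  by move=> u; exact: (weak_cvg_subseq psi_incr (gs0 u)).
apply: ginv_not0 => u; rewrite (X0 u).
have -> : (fun n => ginv (gs n) 0) = fun _ => 0 by apply: funext => n; exact: X0.
exact: weak_cvg_cst.
Qed.

Lemma op_weak_cvg_swap (gs hs : nat -> X -> X) :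
  (forall n, G (gs n)) -> (forall n, G (hs n)) ->
  op_weak_cvg (fun n => ginv (gs n) \o hs n) (fun _ => 0) ->
  op_weak_cvg (fun n => ginv (hs n) \o gs n) (fun _ => 0).
Proof.
move=> Ggs Ghs gh0 u.
have := op_weak_cvg_inv _ (fun n => dislocation_quotient (Ggs n) (Ghs n)) gh0 u.
congr weak_cvg; apply: funext => n /=.
by rewrite ginv_comp //; exact: dislocation_bijective.
Qed.

(* The profile decomposition step: if the dislocations [g^(l)] are pairwise
   asymptotically orthogonal and [w^(l)] is the weak limit of
   [(g^(l)_n)^{-1} u_n], then the remainder [u_n - sum_m g^(m)_n w^(m)],
   seen through [(g^(l)_n)^{-1}], is weakly null: the term [m = l] gives
   [w^(l)], the terms [m <> l] vanish by orthogonality. *)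
Lemma profile_remainder_weak_null {u : nat -> X} {L : nat}
    {g : nat -> nat -> X -> X} {w : nat -> X} :
  (forall l n, (l <= L)%N -> G (g l n)) ->
  (forall l, (l <= L)%N -> weak_cvg (fun n => ginv (g l n) (u n)) (w l)) ->
  (forall l m, (l < m)%N -> (m <= L)%N ->
     op_weak_cvg (fun n => ginv (g l n) \o g m n) (fun _ => 0)) ->
  forall l, (l <= L)%N ->
    weak_cvg (fun n => ginv (g l n) (u n - \sum_(m < L.+1) g m n (w m))) 0.
Proof.
move=> Gg gu gorth l lL.
pose a (m : 'I_L.+1) := if m == l :> nat then w l else 0.
have term_cvg (m : 'I_L.+1) : weak_cvg (fun n => ginv (g l n) (g m n (w m))) (a m).
  have mL : (m <= L)%N by rewrite -ltnS.
  rewrite /a; case: ltngtP => [ml|lm|ml].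
  - exact: (op_weak_cvg_swap _ _ (fun n => Gg _ n mL) (fun n => Gg _ n lL) (gorth _ _ ml lL)).
  - exact: gorth.
  - have fixed n : ginv (g l n) (g l n (w l)) = w l.
      by rewrite ginvKl //; exact: dislocation_bijective (Gg _ _ lL).
    by rewrite ml (funext fixed); exact: weak_cvg_cst.
have sum_a : \sum_(m < L.+1) a m = w l.
  by rewrite -big_mkcond (big_ord1_eq _ (fun _ => w l)) ltnS lL.
have split_remainder n : ginv (g l n) (u n - \sum_(m < L.+1) g m n (w m)) =
    ginv (g l n) (u n) - \sum_(m < L.+1) ginv (g l n) (g m n (w m)).
  have [ginv_lin _] := dislocation_iso (dislocation_inv (Gg l n lL)).
  by rewrite operatorB // operator_sum.
have sum_cvg :
    weak_cvg (fun n => \sum_(m < L.+1) ginv (g l n) (g m n (w m))) (w l).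
  by rewrite -sum_a; apply: weak_cvg_sum => m _; exact: term_cvg.
by rewrite (funext split_remainder); have := weak_cvgB (gu l lL) sum_cvg; rewrite subrr.
Qed.

End DislocationSpace.

Theorem mainTheorem6 (R : realType) (X : completeNormedModType R)
  (G : set (X -> X)) (u : nat -> X) (L : nat)
  (g : nat -> nat -> X -> X) (w : nat -> X)
  (gL1 : nat -> X -> X) (phi : nat -> nat) (wL1 : X) :
  dislocation_space G ->
  reflexive_space X ->
  (exists M : R, forall n, `|u n| <= M) ->
  (forall l n, (l <= L)%N -> G (g l n)) ->
  (forall n, g 0%N n = id) ->
  (forall l, (l <= L)%N -> weak_cvg (fun n => ginv (g l n) (u n)) (w l)) ->
  (forall l m, (l < m)%N -> (m <= L)%N ->
     op_weak_cvg (fun n => ginv (g l n) \o g m n) (fun _ => 0)) ->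
  (forall n, G (gL1 n)) ->
  strictly_incr phi ->
  weak_cvg (fun j => ginv (gL1 (phi j))
                        (u (phi j) - \sum_(l < L.+1) g l (phi j) (w l))) wL1 ->
  wL1 != 0 ->
  forall l, (l <= L)%N ->
    op_weak_cvg (fun j => ginv (g l (phi j)) \o gL1 (phi j)) (fun _ => 0).
Proof.
move=> DS _ _ Gg _ gu gorth GL1 phi_incr rem_cvg wL1_neq0 l lL.
have [_ [_ [_ [_ [_ weak_null_sub]]]]] := DS.
apply: contrapT => not_orth.
pose k j := ginv (gL1 (phi j)) \o g l (phi j).
have Gk j : G (k j) := dislocation_quotient DS (GL1 _) (Gg _ _ lL).
have k_not0 : ~ op_weak_cvg k (fun _ => 0).
  by move/(op_weak_cvg_swap DS _ _ (fun j => GL1 _) (fun j => Gg _ _ lL)).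
(* [v_j = (g^(l))^{-1} (remainder)] is weakly null, and [k_j v_j] is the
   sequence of the hypothesis, with weak limit [w^(L+1)] *)
pose v j := ginv (g l (phi j)) (u (phi j) - \sum_(m < L.+1) g m (phi j) (w m)).
have v0 : weak_cvg v 0.
  exact: (weak_cvg_subseq phi_incr (profile_remainder_weak_null DS Gg gu gorth _ lL)).
have kv_cvg : weak_cvg (fun j => k j (v j)) wL1.
  suff -> : (fun j => k j (v j)) = (fun j => ginv (gL1 (phi j))
                        (u (phi j) - \sum_(m < L.+1) g m (phi j) (w m))) by [].
  by apply: funext => j; rewrite /k /v /= ginvK //; exact: (dislocation_bijective DS (Gg l (phi j) lL)).
(* property (2): along a further subsequence [k_j v_j] is weakly null *)
have [psi [psi_incr kv0]] := weak_null_sub k v Gk k_not0 v0.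
by move/eqP: wL1_neq0; apply; exact: weak_cvg_unique (weak_cvg_subseq psi_incr kv_cvg) kv0.
Qed.
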